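(* Let $H$ be a hexagonal system with a perfect matching, and let $H_1,H_2,\ldots,H_k$ ($k\ge 1$) be its normal components. Then $$cf(H)=\sum_{i=1}^{k} cf(H_i).$$
   Context: A hexagonal system (HS) is a finite 2-connected plane graph in which every interior face is a regular hexagon (a hexagon of the hexagonal lattice); its interior faces are called hexagons. For a graph $G$ with a perfect matching and a perfect matching $M$ of $G$, a forcing set of $M$ is a subset of $M$ contained in no other perfect matching of $G$. A complete forcing set of $G$ is a set $S\subseteq E(G)$ such that for every perfect matching $M$ of $G$, $S\cap M$ is a forcing set of $M$. The complete forcing number $cf(G)$ is the minimum cardinality of a complete forcing set of $G$. An edge of an HS $H$ with a perfect matching is a fixed double edge if it lies in every perfect matching of $H$, and a fixed single edge if it lies in no perfect matching of $H$; these are the fixed edges. $H$ is normal if it has no fixed edge. The non-fixed edges of $H$ span a subgraph each of whose components is a normal HS; these components are the normal components of $H$ (if $H$ is normal, its only normal component is $H$ itself). *)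

From mathcomp Require Import all_boot all_order all_algebra.
From mathcomp Require Import finmap.
Set Implicit Arguments. Unset Strict Implicit. Unset Printing Implicit Defensive.
Import GRing.Theory Num.Theory.
Local Open Scope fset_scope.

(* Vertices are the points of Z^2.  The edges are all horizontal unit
   segments (x,y)-(x+1,y) and the vertical unit segments (x,y)-(x,y+1)
   with x+y even.  This plane graph is (a plane drawing of) the hexagonal
   lattice; its bounded faces are the "bricks" (hexagons). *)
Definition vertex := (int * int)%type.

(* An edge is named by its lower/left endpoint and a flag:
   (p, true) = horizontal edge p -- p+(1,0);
   (p, false) = vertical edge p -- p+(0,1)  (only used when x+y is even). *)
Definition edge := (vertex * bool)%type.

Definition ends (e : edge) : seq vertex :=
  let: ((x, y), h) := e in
  if h then [:: (x, y); (x + 1, y)%R] else [:: (x, y); (x, y + 1)%R].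

(* A cell (hexagon of the lattice) is named by its lower-left corner (x,y),
   with x+y even.  Its six vertices are (x..x+2, y) and (x..x+2, y+1). *)
Definition cell := (int * int)%type.

Definition valid_cell (c : cell) : bool := let: (x, y) := c in (2 %| (x + y)%R)%Z.

Definition cell_edges (c : cell) : {fset edge} :=
  let: (x, y) := c in
  [fset ((x, y), true); ((x + 1, y)%R, true);
        ((x, y + 1)%R, true); ((x + 1, y + 1)%R, true);
        ((x, y), false); ((x + 2, y)%R, false)].

Definition cell_adj (c d : cell) : bool :=
  (c != d) && (cell_edges c `&` cell_edges d != fset0).

(* A hexagonal system is determined by its (finite, nonempty) set S of
   hexagons: S is connected through shared edges (this makes the graph
   2-connected) and has no holes, i.e. every lattice cell outside S can
   be joined to infinity through cells outside S (so every interior face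
   of the resulting plane graph is a lattice hexagon). *)
Definition is_HS (S : {fset cell}) : Prop :=
  [/\ S != fset0,
      (forall c, c \in S -> valid_cell c),
      (forall c d, c \in S -> d \in S ->
         exists p : seq cell, [/\ path cell_adj c p, all (mem S) p & last c p = d])
    & (forall c, valid_cell c -> c \notin S -> forall N : nat,
         exists p : seq cell,
           [/\ path cell_adj c p, all valid_cell p, all (fun d => d \notin S) p
             & (N%:Z < `|fst (last c p)|)%R])].

Definition HS_edges (S : {fset cell}) : {fset edge} :=
  \bigcup_(c <- S) cell_edges c.

(* A graph (without isolated vertices) is given by its finite edge set E. *)

Definition is_pm (E M : {fset edge}) : bool :=
  (M `<=` E) &&
  all (fun e => all (fun v => #|` [fset f in M | v \in ends f]| == 1) (ends e))
      (enum_fset E).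

Definition has_pm (E : {fset edge}) : Prop := exists M, is_pm E M.

(* F is a forcing set of the perfect matching M: F is a subset of M
   contained in no other perfect matching (perfect matchings are subsets
   of E, so it suffices to range over the subsets of E). *)
Definition forcing_set (E M F : {fset edge}) : bool :=
  (F `<=` M) &&
  all (fun M' => is_pm E M' ==> (F `<=` M') ==> (M' == M))
      (enum_fset (fpowerset E)).

Definition complete_forcing (E S : {fset edge}) : bool :=
  (S `<=` E) &&
  all (fun M => is_pm E M ==> forcing_set E M (S `&` M))
      (enum_fset (fpowerset E)).

(* complete forcing number: the minimum size of a complete forcing set.
   (E itself is always a complete forcing set, so the default value #|E|
   of the minimum is never the only candidate.) *)
Definition cf (E : {fset edge}) : nat :=
  \big[minn/#|` E|]_(S <- enum_fset (fpowerset E) | complete_forcing E S) #|` S|.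

Definition fixed_double (E : {fset edge}) (e : edge) : Prop :=
  e \in E /\ forall M, is_pm E M -> e \in M.
Definition fixed_single (E : {fset edge}) (e : edge) : Prop :=
  e \in E /\ forall M, is_pm E M -> e \notin M.
Definition non_fixed (E : {fset edge}) (e : edge) : Prop :=
  e \in E /\ ~ fixed_double E e /\ ~ fixed_single E e.

Definition share_vertex (e f : edge) : bool := has (fun v => v \in ends f) (ends e).

Definition is_normal_component (E C : {fset edge}) : Prop :=
  [/\ C != fset0,
      (forall e, e \in C -> non_fixed E e),
      (forall e f, e \in C -> f \in C ->
         exists p : seq edge, [/\ path share_vertex e p, all (mem C) p & last e p = f])
    & (forall e f, e \in C -> non_fixed E f -> share_vertex e f -> f \in C)].

From mathcomp Require Import all_boot all_order all_algebra.
From mathcomp Require Import finmap.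
From Stdlib Require Import Classical ClassicalEpsilon.
Set Implicit Arguments. Unset Strict Implicit. Unset Printing Implicit Defensive.
Local Open Scope fset_scope.

(* A fixed edge has the
   same status in every perfect matching, so a perfect matching of E is
   determined by its traces on the normal components, and these traces can
   be chosen independently of each other:
   - the trace M `&` C of a perfect matching M of E on a normal component C
     is a perfect matching of C, because an edge of M touching C lies in C
     (pm_restrict);
   - replacing M `&` C by any perfect matching of C yields again a perfect
     matching of E (pm_replace).
   Hence the trace S `&` C of a complete forcing set S of E is a complete
   forcing set of C (complete_forcing_restrict); as distinct components are
   disjoint, summing gives  sum_C cf C <= cf E.  Conversely a union of
   complete forcing sets of all components is a complete forcing set of E
   (complete_forcing_glue), giving  cf E <= sum_C cf C.  Nothing here uses
   the hexagonal structure: the additivity holds for every finite graph with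
   a perfect matching (cf_additive), and the theorem is its special case. *)

Lemma is_pmP (E M : {fset edge}) : is_pm E M <->
  M `<=` E /\ forall e v, e \in E -> v \in ends e ->
                #|` [fset f in M | v \in ends f]| = 1%N.
Proof.
split=> [/andP[ME /allP covE]|[ME covE]].
  by split=> // e v eE ve; have /allP /(_ v ve) /eqP := covE e eE.
apply/andP; split=> //; apply/allP=> e eE; apply/allP=> v ve.
by rewrite (covE e v eE ve).
Qed.

Lemma pm_sub (E M : {fset edge}) : is_pm E M -> M `<=` E.
Proof. by case/is_pmP. Qed.

Lemma pm_cover (E M : {fset edge}) e v : is_pm E M -> e \in E -> v \in ends e ->
  exists2 f, f \in M & v \in ends f.
Proof.
move=> /is_pmP[_ covE] eE ve; have /eqP/cardfs1P[f Mv] := covE e v eE ve.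
have : f \in [fset f in M | v \in ends f] by rewrite Mv inE.
by rewrite !inE => /andP[]; exists f.
Qed.

Lemma pm_unique (E M : {fset edge}) e v f g : is_pm E M -> e \in E -> v \in ends e ->
  f \in M -> g \in M -> v \in ends f -> v \in ends g -> f = g.
Proof.
move=> /is_pmP[_ covE] eE ve fM gM vf vg; have /eqP/cardfs1P[x Mv] := covE e v eE ve.
have : f \in [fset f in M | v \in ends f] by rewrite !inE fM vf.
have : g \in [fset f in M | v \in ends f] by rewrite !inE gM vg.
by rewrite Mv !inE => /eqP -> /eqP ->.
Qed.

Lemma ends_head (e : edge) : e.1 \in ends e.
Proof. by case: e => [[x y] []]; rewrite /ends inE eqxx. Qed.

Lemma pm_sub_eq (E M M' : {fset edge}) :
  is_pm E M -> is_pm E M' -> M `<=` M' -> M' = M.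
Proof.
move=> pM pM' MM'; apply/fsetP=> e; apply/idP/idP=> [eM'|/(fsubsetP MM') //].
have eE : e \in E by apply: (fsubsetP (pm_sub pM')).
have [f fM ef] := pm_cover pM eE (ends_head e).
by rewrite (pm_unique pM' eE (ends_head e) eM' (fsubsetP MM' f fM) (ends_head e) ef).
Qed.

Lemma forcing_setP (E M F : {fset edge}) : forcing_set E M F <->
  F `<=` M /\ forall M', is_pm E M' -> F `<=` M' -> M' = M.
Proof.
split=> [/andP[FM /allP uniqM]|[FM uniqM]].
  split=> // M' pM' FM'.
  have : M' \in enum_fset (fpowerset E) by rewrite fpowersetE (pm_sub pM').
  by move/uniqM; rewrite pM' FM' => /eqP.
apply/andP; split=> //; apply/allP=> M' _.
by apply/implyP=> pM'; apply/implyP=> FM'; rewrite (uniqM M' pM' FM').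
Qed.

Lemma complete_forcingP (E S : {fset edge}) : complete_forcing E S <->
  S `<=` E /\ forall M, is_pm E M -> forcing_set E M (S `&` M).
Proof.
split=> [/andP[SE /allP forceS]|[SE forceS]].
  split=> // M pM.
  have : M \in enum_fset (fpowerset E) by rewrite fpowersetE (pm_sub pM).
  by move/forceS; rewrite pM.
by apply/andP; split=> //; apply/allP=> M _; apply/implyP; apply: forceS.
Qed.

Lemma complete_forcing_self (E : {fset edge}) : complete_forcing E E.
Proof.
apply/complete_forcingP; split=> // M pM; apply/forcing_setP.
rewrite (fsetIidPr (pm_sub pM)); split=> [|M' pM' MM']; first exact: fsubset_refl.
exact: pm_sub_eq pM pM' MM'.
Qed.

Lemma cf_le (E S : {fset edge}) : complete_forcing E S -> cf E <= #|` S|.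
Proof.
move=> cS; have SE : S \in enum_fset (fpowerset E).
  by rewrite fpowersetE; case/complete_forcingP: cS.
have := Order.TotalTheory.ge_bigmin_seq #|` E| S _ (fun S => #|` S|) SE cS.
by rewrite minEnat.
Qed.

(* The minimum defining cf is attained (E itself being a candidate). *)
Lemma cf_attained (E : {fset edge}) :
  exists S, complete_forcing E S && (#|` S| == cf E).
Proof.
suff [S cS <-] : exists2 S, complete_forcing E S & #|` S| = cf E.
  by exists S; rewrite cS eqxx.
rewrite /cf big_seq_cond; elim/big_ind: _ => [|m n [S cS <-] [T cT <-]|S /andP[_ cS]].
- by exists E; first exact: complete_forcing_self.
- by rewrite /minn; case: ifP => _; [exists S | exists T].
- by exists S.
Qed.

Definition cf_witness (E : {fset edge}) : {fset edge} := xchoose (cf_attained E).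

Lemma cf_witnessP (E : {fset edge}) :
  complete_forcing E (cf_witness E) /\ #|` cf_witness E| = cf E.
Proof. by have /andP[cS /eqP] := xchooseP (cf_attained E). Qed.

Lemma non_fixed_in_pm (E : {fset edge}) e : non_fixed E e -> exists2 M, is_pm E M & e \in M.
Proof.
move=> [eE [_ not_single]]; apply: NNPP => noM; apply: not_single; split=> // M pM.
by apply/negP=> eM; apply: noM; exists M.
Qed.

Lemma pm_agree_fixed (E M M' : {fset edge}) e : is_pm E M -> is_pm E M' ->
  ~ non_fixed E e -> (e \in M) = (e \in M').
Proof.
move=> pM pM' nnf; case eE: (e \in E); last first.
  by rewrite (contraFF (fsubsetP (pm_sub pM) e)) ?(contraFF (fsubsetP (pm_sub pM') e)).
have fixed : fixed_double E e \/ fixed_single E e.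
  by apply: NNPP => nfx; apply: nnf; split=> //; split=> fx; apply: nfx; [left|right].
by case: fixed => [[_ dbl]|[_ sgl]]; rewrite ?dbl // !(negbTE (sgl _ _)).
Qed.

Lemma component_sub (E C : {fset edge}) : is_normal_component E C -> C `<=` E.
Proof. by case=> _ nfC _ _; apply/fsubsetP=> e /nfC []. Qed.

(* An edge of a perfect matching touching a normal component C lies in C:
   it is not fixed, since otherwise the edge of C at the common vertex would
   be fixed as well. *)
Lemma matched_edge_in_component (E C M : {fset edge}) g v h :
  is_pm E M -> is_normal_component E C ->
  g \in C -> v \in ends g -> h \in M -> v \in ends h -> h \in C.
Proof.
move=> pM [_ nfC _ closedC] gC vg hM vh.
have gnf := nfC g gC; have gE : g \in E by case: gnf.
apply: (closedC g h gC); last by apply/hasP; exists v.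
have hE : h \in E by apply: (fsubsetP (pm_sub pM)).
split=> //; split=> [[_ dbl]|[_ /(_ M pM)]]; last by rewrite hM.
have [M2 pM2 gM2] := non_fixed_in_pm gnf.
have hg := pm_unique pM2 gE vg (dbl M2 pM2) gM2 vh vg.
by case: gnf => _ [+ _]; apply; split=> //; rewrite -hg.
Qed.

Lemma pm_restrict (E C M : {fset edge}) : is_pm E M -> is_normal_component E C ->
  is_pm C (M `&` C).
Proof.
move=> pM HC; apply/is_pmP; split=> [|e v eC ve]; first exact: fsubsetIr.
have -> : [fset f in M `&` C | v \in ends f] = [fset f in M | v \in ends f].
  apply/fsetP=> f; rewrite !inE; have [fM|] //= := boolP (f \in M).
  by case vf: (v \in ends f); rewrite ?andbF // (matched_edge_in_component pM HC eC ve).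
by case/is_pmP: pM => _ /(_ e v (fsubsetP (component_sub HC) e eC) ve).
Qed.

Lemma pm_replace (E C M N : {fset edge}) : is_pm E M -> is_normal_component E C ->
  is_pm C N -> is_pm E ((M `\` C) `|` N).
Proof.
move=> pM HC pN; have CE := component_sub HC; apply/is_pmP; split.
  by rewrite fsubUset (fsubset_trans (fsubsetDl _ _) (pm_sub pM))
             (fsubset_trans (pm_sub pN) CE).
move=> e v eE ve; have [/hasP[g gC vg]|vC] := boolP (has (fun g => v \in ends g) C).
  (* v is a vertex of C: only N matters at v *)
  have -> : [fset f in (M `\` C) `|` N | v \in ends f] = [fset f in N | v \in ends f].
    apply/fsetP=> f; rewrite !inE; case vf: (v \in ends f); rewrite ?andbF ?andbT //.
    case fM: (f \in M); rewrite ?andbF ?andbT //.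
    by rewrite (matched_edge_in_component pM HC gC vg fM vf).
  by case/is_pmP: pN => _ /(_ g v gC vg).
(* v is not a vertex of C: only M matters at v *)
have -> : [fset f in (M `\` C) `|` N | v \in ends f] = [fset f in M | v \in ends f].
  apply/fsetP=> f; rewrite !inE; case vf: (v \in ends f); rewrite ?andbF ?andbT //.
  have fC : f \notin C by apply: contra vC => fC; apply/hasP; exists f.
  by rewrite (negbTE (contra (fsubsetP (pm_sub pN) f) fC)) fC orbF.
by case/is_pmP: pM => _ /(_ e v eE ve).
Qed.

Lemma replace_trace (C M N : {fset edge}) : N `<=` C -> ((M `\` C) `|` N) `&` C = N.
Proof.
move=> NC; apply/fsetP=> f; rewrite !inE.
by case fN: (f \in N); [rewrite orbT (fsubsetP NC) | case: (f \in C); rewrite ?andbF].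
Qed.

(* Traces of complete forcing sets on normal components are complete forcing
   sets: perfect matchings of C extend, identically outside C, to E. *)
Lemma complete_forcing_restrict (E C S : {fset edge}) : has_pm E ->
  is_normal_component E C -> complete_forcing E S -> complete_forcing C (S `&` C).
Proof.
move=> [M0 pM0] HC /complete_forcingP[_ forceS].
apply/complete_forcingP; split=> [|N pN]; first exact: fsubsetIr.
apply/forcing_setP; split=> [|N' pN' SN']; first exact: fsubsetIr.
have NC := pm_sub pN; have N'C := pm_sub pN'.
have /forcing_setP[_ forced] := forceS _ (pm_replace pM0 HC pN).
rewrite -(replace_trace M0 NC) -(replace_trace M0 N'C).
congr (_ `&` C); apply: forced; first exact: pm_replace.
apply/fsubsetP=> f; rewrite !inE => /andP[fS /orP[/andP[fC fM0] | fN]].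
  by rewrite fC fM0.
by rewrite (fsubsetP SN') ?orbT // !inE fS (fsubsetP NC).
Qed.

(* If every non-fixed edge lies in a normal component C having a complete
   forcing set inside T, then T is a complete forcing set of E: a perfect
   matching containing the trace of T agrees with M on each component, and on
   the fixed edges anyway. *)
Lemma complete_forcing_glue (E T : {fset edge}) : T `<=` E ->
  (forall e, non_fixed E e -> exists C, [/\ is_normal_component E C, e \in C &
      exists2 SC, complete_forcing C SC & SC `<=` T]) ->
  complete_forcing E T.
Proof.
move=> TE covT; apply/complete_forcingP; split=> // M pM.
apply/forcing_setP; split=> [|M' pM' TM']; first exact: fsubsetIr.
apply/fsetP=> e; have [nfe|nnf] := classic (non_fixed E e); last first.
  by rewrite (pm_agree_fixed pM pM' nnf).
have [C [HC eC [SC /complete_forcingP[SCC forceSC] SCT]]] := covT e nfe.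
have /forcing_setP[_ forced] := forceSC _ (pm_restrict pM HC).
have traceM : M' `&` C = M `&` C.
  apply: forced; first exact: pm_restrict pM' HC.
  apply/fsubsetP=> f; rewrite !inE => /andP[fSC /andP[fM fC]].
  by rewrite fC (fsubsetP TM') // !inE (fsubsetP SCT) ?fM.
by have := congr1 (fun X => e \in X) traceM; rewrite /= !inE eC !andbT.
Qed.

(* Classical boolean decision of a proposition, needed to carve the finite
   set of edges reachable through non-fixed edges out of E. *)
Definition classicb (P : Prop) : bool :=
  if excluded_middle_informative P then true else false.

Lemma classicbP (P : Prop) : reflect P (classicb P).
Proof. by rewrite /classicb; case: excluded_middle_informative; constructor. Qed.

Lemma path_reverse (T : eqType) (r : rel T) x p : symmetric r -> path r x p ->
  exists2 q, path r (last x p) q & last (last x p) q = x /\ {subset q <= x :: p}.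
Proof.
move=> r_sym; elim: p x => [|y p IH] x /=; first by exists [::].
move=> /andP[rxy /IH[q pq [lq sq]]]; exists (rcons q x).
  by rewrite rcons_path pq lq r_sym.
split=> [|z]; first by rewrite last_rcons.
by rewrite mem_rcons !inE => /orP[->|/sq]; rewrite ?inE => // ->; rewrite orbT.
Qed.

Lemma path_prefix (T : eqType) (r : rel T) x p y : path r x p -> y \in p ->
  exists q, [/\ path r x q, last x q = y & {subset q <= p}].
Proof.
move=> rp yp; case/splitPr: yp rp => p1 p2; rewrite cat_path /= => /and3P[rp1 ry _].
exists (rcons p1 y); rewrite rcons_path rp1 ry last_rcons; split=> // z.
by rewrite mem_rcons mem_cat !inE => /orP[->|->]; rewrite ?orbT.
Qed.

Lemma share_vertex_sym : symmetric share_vertex.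
Proof. by move=> e f; apply/hasP/hasP=> -[v ve vf]; exists v. Qed.

Definition nf_reach (E : {fset edge}) (e f : edge) : Prop := exists p,
  [/\ path share_vertex e p, (forall x, x \in p -> non_fixed E x) & last e p = f].

Definition component_of (E : {fset edge}) (e : edge) : {fset edge} :=
  [fset f in E | classicb (non_fixed E f /\ nf_reach E e f)].

Lemma component_ofP (E : {fset edge}) e f :
  f \in component_of E e <-> non_fixed E f /\ nf_reach E e f.
Proof.
rewrite !inE; split=> [/andP[_ /classicbP]//|nf_f].
by apply/andP; split; [case: nf_f.1 | apply/classicbP].
Qed.

Lemma nf_reach_on_path (E : {fset edge}) e p y : path share_vertex e p ->
  (forall x, x \in p -> non_fixed E x) -> y \in p -> y \in component_of E e.
Proof.
move=> ep nfp yp; have [q [ep_q lq sq]] := path_prefix ep yp.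
by apply/component_ofP; split; [exact: nfp | exists q; split=> // x /sq /nfp].
Qed.

Lemma component_of_normal (E : {fset edge}) e :
  non_fixed E e -> is_normal_component E (component_of E e).
Proof.
move=> nfe; have eC : e \in component_of E e by apply/component_ofP; split=> //; exists [::].
split.
- by apply/fset0Pn; exists e.
- by move=> f /component_ofP[].
- move=> f g /component_ofP[_ [p1 [ep1 nf1 <-]]] /component_ofP[_ [p2 [ep2 nf2 <-]]].
  have [q fq [lq sq]] := path_reverse share_vertex_sym ep1.
  exists (q ++ p2); split; first by rewrite cat_path fq lq.
    apply/allP=> x; rewrite mem_cat => /orP[/sq|xp2]; last exact: (nf_reach_on_path ep2).
    by rewrite inE => /orP[/eqP->|]; last exact: (nf_reach_on_path ep1).
  by rewrite last_cat lq.
- move=> f g /component_ofP[_ [p [ep nfp lp]]] nfg fg; apply/component_ofP; split=> //.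
  exists (rcons p g); rewrite rcons_path ep lp fg last_rcons; split=> // x.
  by rewrite mem_rcons inE => /orP[/eqP->|/nfp].
Qed.

Lemma component_path_closed (E C : {fset edge}) x p : is_normal_component E C ->
  x \in C -> path share_vertex x p -> (forall y, y \in p -> non_fixed E y) ->
  all (mem C) p.
Proof.
move=> [_ _ _ closedC]; elim: p x => //= y p IH x xC /andP[xy yp] nfp.
have yC : y \in C by apply: (closedC x) => //; apply: nfp; rewrite inE eqxx.
by rewrite yC (IH y) // => z zp; apply: nfp; rewrite inE zp orbT.
Qed.

Lemma component_sub_shared (E C C' : {fset edge}) e :
  is_normal_component E C -> is_normal_component E C' ->
  e \in C -> e \in C' -> C `<=` C'.
Proof.
move=> HC HC' eC eC'; apply/fsubsetP=> f fC; case: (HC) => _ nfC connC _.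
have [p [ep /allP pC <-]] := connC e f eC fC.
have /allP pC' := component_path_closed HC' eC' ep (fun y yp => nfC y (pC y yp)).
by have := mem_last e p; rewrite inE => /orP[/eqP->|/pC'].
Qed.

Lemma components_disjoint (E C C' : {fset edge}) :
  is_normal_component E C -> is_normal_component E C' -> C != C' -> C `&` C' = fset0.
Proof.
move=> HC HC' neqCC'; apply/eqP; apply: contraNT neqCC' => /fset0Pn[e].
rewrite inE => /andP[eC eC']; rewrite eqEfsubset.
by rewrite (component_sub_shared HC HC' eC eC') (component_sub_shared HC' HC eC' eC).
Qed.

Lemma sum_card_traces (L : seq {fset edge}) (X : {fset edge}) : uniq L ->
  {in L &, forall C C', C != C' -> C `&` C' = fset0} ->
  \sum_(C <- L) #|` X `&` C| <= #|` X|.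
Proof.
elim: L X => [|C L IH] X; first by rewrite big_nil.
move=> /= /andP[CL uL] disj; rewrite big_cons -[leqRHS](cardfsID C X) leq_add2l.
have -> : \sum_(D <- L) #|` X `&` D| = \sum_(D <- L) #|` (X `\` C) `&` D|.
  apply: eq_big_seq => D DL; congr #|` _|; apply/fsetP=> x; rewrite !inE.
  have CD : C != D by rewrite eq_sym (memPn CL).
  have /fsetP/(_ x) := disj C D (mem_head C L) (mem_behead (s := C :: L) DL) CD.
  by rewrite !inE; case: (x \in C); case: (x \in D); rewrite ?andbF.
by apply: IH => // D D' DL D'L; apply: disj; rewrite inE ?DL ?D'L orbT.
Qed.

Lemma card_bigfcup (L : seq {fset edge}) (F : {fset edge} -> {fset edge}) :
  #|` \bigcup_(C <- L) F C| <= \sum_(C <- L) #|` F C|.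
Proof.
elim/big_ind2: _ => // m A n B Am Bn.
exact: leq_trans (leq_card_fsetU A B) (leq_add Am Bn).
Qed.

(* Upper bound: the union of minimum complete forcing sets of all normal
   components is a complete forcing set of E. *)
Lemma cf_le_sum_components (E : {fset edge}) (Hs : seq {fset edge}) :
  (forall C, C \in Hs <-> is_normal_component E C) ->
  cf E <= \sum_(C <- Hs) cf C.
Proof.
move=> Hs_comp; pose T := \bigcup_(C <- Hs) cf_witness C.
apply: leq_trans (cf_le _) (leq_trans (card_bigfcup Hs cf_witness) _); last first.
  by rewrite big_seq [leqRHS]big_seq leq_sum // => C _; rewrite (cf_witnessP C).2.
apply: (complete_forcing_glue (T := T)).
  apply/bigfcupsP=> C /Hs_comp HC _; apply: fsubset_trans (component_sub HC).
  by case/complete_forcingP: (cf_witnessP C).1.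
move=> e nfe; have HCe := component_of_normal nfe.
exists (component_of E e); split=> //; first by apply/component_ofP; split=> //; exists [::].
exists (cf_witness (component_of E e)); first exact: (cf_witnessP _).1.
by apply: bigfcup_sup => //; apply/Hs_comp.
Qed.

(* Lower bound: a minimum complete forcing set of E leaves a complete forcing
   set on each normal component, and these traces are disjoint. *)
Lemma sum_components_le_cf (E : {fset edge}) (Hs : seq {fset edge}) :
  has_pm E -> uniq Hs -> (forall C, C \in Hs <-> is_normal_component E C) ->
  \sum_(C <- Hs) cf C <= cf E.
Proof.
move=> pmE uHs Hs_comp; have [cS <-] := cf_witnessP E.
apply: leq_trans (sum_card_traces (cf_witness E) uHs _); last first.
  by move=> C C' /Hs_comp HC /Hs_comp HC'; exact: components_disjoint HC HC'.
rewrite big_seq [leqRHS]big_seq leq_sum // => C /Hs_comp HC.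
exact/cf_le/(complete_forcing_restrict pmE HC cS).
Qed.

Theorem cf_additive (E : {fset edge}) (Hs : seq {fset edge}) : has_pm E -> uniq Hs ->
  (forall C, C \in Hs <-> is_normal_component E C) ->
  cf E = \sum_(C <- Hs) cf C.
Proof.
move=> pmE uHs Hs_comp; apply/eqP; rewrite eqn_leq.
by rewrite cf_le_sum_components // sum_components_le_cf.
Qed.

(* The theorem for hexagonal systems. *)
Theorem mainTheorem1 (S : {fset cell}) (Hs : seq {fset edge}) :
  is_HS S -> has_pm (HS_edges S) ->
  uniq Hs ->
  (forall C, C \in Hs <-> is_normal_component (HS_edges S) C) ->
  cf (HS_edges S) = \sum_(C <- Hs) cf C.
Proof. by move=> _; apply: cf_additive. Qed.
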